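(* Let $n \equiv 1 \pmod 6$ be a positive integer and let $\alpha$ be a primitive element of $\mathbb{F}_{2^n}$ (identified with $\mathbb{F}_2^n$). If there exist $\frac{2^n-2}{42}$ pairwise disjoint complete $3$-dimensional subspaces of $\mathbb{F}_2^n$, then there exists a Steiner structure $\mathbb{S}_2[2,3,n]$.
   Context: For a $3$-dimensional $\mathbb{F}_2$-subspace $X = \{0,\alpha^{i_1},\ldots,\alpha^{i_7}\}$ of $\mathbb{F}_{2^n}$ with $i_1,\ldots,i_7\in\{0,\ldots,2^n-2\}$ distinct, its difference set is $\Delta(X) = \{ i_r - i_s \bmod (2^n-1) : 1 \le r,s\le 7,\ r\ne s\}$. $X$ is complete if $|\Delta(X)| = 42$; two complete subspaces $X,Y$ are disjoint complete (pairwise disjoint complete) if $\Delta(X)\cap\Delta(Y) = \varnothing$. A Steiner structure $\mathbb{S}_q[t,k,n]$ is a set $\mathbb{S}$ of $k$-dimensional subspaces of $\mathbb{F}_q^n$ such that every $t$-dimensional subspace of $\mathbb{F}_q^n$ is contained in exactly one element of $\mathbb{S}$. *)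

From HB Require Import structures.
From mathcomp Require Import all_boot all_order all_algebra all_field.
Set Implicit Arguments. Unset Strict Implicit. Unset Printing Implicit Defensive.
Import GRing.Theory.
Local Open Scope ring_scope.

(* A k-dimensional F_2-subspace of a finite additive group V (used with V of
   characteristic 2: a finite field of order 2^n, or 'rV['F_2]_n).  Over F_2,
   scalar multiplication by 0 or 1 is automatic, so a subspace is a subset
   containing 0 and closed under addition; its dimension is k iff it has 2^k
   elements. *)
Definition is_subspace2 (V : finZmodType) (k : nat) (X : {set V}) : bool :=
  [&& (0 : V) \in X,
      [forall x in X, forall y in X, x + y \in X]
    & #|X| == (2 ^ k)%N].

Definition diffset (F : finFieldType) (a : F) (X : {set F}) : {set 'I_(#|F|.-1)} :=
  [set d : 'I_(#|F|.-1) | [exists i : 'I_(#|F|.-1), exists j : 'I_(#|F|.-1),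
     [&& i != j, a ^+ i \in X, a ^+ j \in X &
         (d == (i + #|F|.-1 - j) %% #|F|.-1 :> nat)%N]]].

Definition complete (F : finFieldType) (a : F) (X : {set F}) : bool :=
  #|diffset a X| == 42%N.

Definition steiner_structure2 (t k n : nat) (S : {set {set 'rV['F_2]_n}}) : Prop :=
  (forall X, X \in S -> is_subspace2 k X) /\
  (forall T : {set 'rV['F_2]_n}, is_subspace2 t T ->
     #|[set X in S | T \subset X]| = 1%N).

From mathcomp Require Import all_boot all_order all_algebra all_field.

(* Write difference sets multiplicatively: d is in Delta(X) iff alpha^d = u / v
   for distinct nonzero u, v in X.  For a complete 3-dimensional X the map
   (u, v) |-> u / v is then injective on the 42 ordered pairs, and the ratio
   sets of the (2^n - 2)/42 given subspaces are disjoint, hence partition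
   F \ {0, 1}.  Take as blocks all dilates cX (c <> 0) of these subspaces.  In
   characteristic 2 a 2-subspace is {0, x, y, x + y}, and it lies in cX iff
   x/c, y/c are in X.  The ratio y/x lies in exactly one ratio set and is
   realised there by exactly one pair (u, v), which forces c = x/v.  An
   additive isomorphism F ~ F_2^n transports the blocks to a Steiner
   structure. *)

Set Implicit Arguments. Unset Strict Implicit. Unset Printing Implicit Defensive.
Import GRing.Theory.
Local Open Scope ring_scope.

Definition steiner_system (V : finZmodType) (t k : nat) (S : {set {set V}}) : Prop :=
  (forall X, X \in S -> is_subspace2 k X) /\
  (forall T : {set V}, is_subspace2 t T -> #|[set X in S | T \subset X]| = 1%N).

Lemma subspace2_image (U V : finZmodType) (f : U -> V) k (X : {set U}) :
  {morph f : x y / x + y} -> injective f -> is_subspace2 k X -> is_subspace2 k (f @: X).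
Proof.
move=> fD f_inj /and3P[X0 /forall_inP Xadd /eqP cardX].
have f0 : f 0 = 0 by apply: (addrI (f 0)); rewrite -fD !addr0.
apply/and3P; split.
- by rewrite -f0 imset_f.
- apply/forall_inP=> _ /imsetP[x xX ->]; apply/forall_inP=> _ /imsetP[y yX ->].
  by rewrite -fD imset_f // (forall_inP (Xadd x xX)).
- by rewrite card_imset ?cardX.
Qed.

Lemma steiner_system_image (U V : finZmodType) (f : U -> V) t k (S : {set {set U}}) :
  {morph f : x y / x + y} -> bijective f -> steiner_system t k S ->
  steiner_system t k [set f @: X | X : {set U} in S].
Proof.
move=> fD [g fK gK] [Sk St]; have f_inj := can_inj fK.
have gD : {morph g : x y / x + y} by move=> x y; apply: f_inj; rewrite fD !gK.
have fgX (X : {set V}) : f @: (g @: X) = X.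
  by rewrite -imset_comp (eq_imset _ gK) imset_id.
have gfX (X : {set U}) : g @: (f @: X) = X.
  by rewrite -imset_comp (eq_imset _ fK) imset_id.
split=> [_ /imsetP[X XS ->]|T Tt]; first exact: subspace2_image fD f_inj (Sk X XS).
have imf_inj : injective (fun X : {set U} => f @: X).
  by move=> X Y eqXY; rewrite -(gfX X) -(gfX Y) eqXY.
have sub_imf (X : {set U}) : (T \subset f @: X) = (g @: T \subset X).
  by rewrite -{1}[T]fgX; apply/idP/idP=> [/(imsetS g)|/(imsetS f)]; rewrite ?gfX.
rewrite -[RHS](St (g @: T)); last exact: subspace2_image gD (can_inj gK) Tt.
rewrite -(card_imset _ imf_inj); apply: eq_card => Y; rewrite !inE.
apply/andP/imsetP=> [[/imsetP[X XS ->]]|[X]].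
  by rewrite sub_imf => TX; exists X; rewrite // inE XS.
by rewrite inE => /andP[XS TX] ->; rewrite imset_f // sub_imf.
Qed.

Section Characteristic2.
Variable V : finZmodType.
Hypothesis addxx : forall x : V, x + x = 0.

Lemma subspace2_plane (T : {set V}) : is_subspace2 2 T ->
  exists x y, [/\ x != 0, y != 0, x != y & T = [set 0; x; y; x + y]].
Proof.
case/and3P=> T0 /forall_inP Tadd /eqP cardT.
have cardT0 : #|T :\ 0| = 3%N by move: (cardsD1 0 T); rewrite T0 cardT => -[].
have [x /setD1P[x0 xT]] : exists x, x \in T :\ 0.
  by apply/set0Pn; rewrite -card_gt0 cardT0.
have [y /setD1P[yx /setD1P[y0 yT]]] : exists y, y \in T :\ 0 :\ x.
  apply/set0Pn; rewrite -card_gt0; move: (cardsD1 x (T :\ 0)).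
  by rewrite cardT0 !inE x0 xT /= add1n => -[<-].
have xyT : x + y \in T by rewrite (forall_inP (Tadd x xT)).
have xy_neq0 : (x + y == 0) = false.
  by apply/negbTE; apply: contra yx => /eqP; rewrite -(addxx x) => /addrI->.
have xy_neqx : (x + y == x) = false.
  by apply/negbTE; rewrite -[X in _ != X]addr0 (inj_eq (addrI x)).
have xy_neqy : (x + y == y) = false.
  by apply/negbTE; rewrite -[X in _ != X]add0r (inj_eq (addIr y)).
exists x, y; split=> //; first by rewrite eq_sym.
apply/esym/eqP; rewrite eqEcard cardT; apply/andP; split.
  by apply/subsetP=> t; rewrite !inE -!orbA => /or4P[] /eqP->.
rewrite [_ :|: [set x + y]]setUC [_ :|: [set y]]setUC !cardsU1 cards1 !inE.
by rewrite xy_neq0 xy_neqx xy_neqy (negbTE y0) (negbTE yx) eq_sym x0.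
Qed.

End Characteristic2.

Lemma plane_subset (V : finZmodType) (x y : V) (B : {set V}) :
  0 \in B -> [forall u in B, forall v in B, u + v \in B] ->
  ([set 0; x; y; x + y] \subset B) = (x \in B) && (y \in B).
Proof.
move=> B0 /forall_inP Badd; apply/subsetP/andP=> [sub|[xB yB] t].
  by split; apply: sub; rewrite !inE eqxx ?orbT.
by rewrite !inE -!orbA => /or4P[] /eqP->; rewrite // (forall_inP (Badd x xB)).
Qed.

Lemma card_bigcup_disjoint (I T : finType) (D : I -> {set T}) :
  (forall i j, i != j -> [disjoint D i & D j]) ->
  #|\bigcup_i D i| = (\sum_i #|D i|)%N.
Proof.
move=> disjD; rewrite -!big_enum; elim: (enum I) (enum_uniq I) => [|i s IHs].
  by rewrite !big_nil cards0.
rewrite /= !big_cons => /andP[i_s s_uniq]; rewrite cardsU -IHs //.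
suff : [disjoint D i & \bigcup_(j <- s) D j].
  by rewrite -setI_eq0 => /eqP->; rewrite cards0 subn0.
rewrite disjoint_sym disjoints_subset bigcup_seq; apply/bigcupsP=> j j_s.
by rewrite -disjoints_subset disjoint_sym disjD //; apply: contraNneq i_s => ->.
Qed.

Lemma bigcup_disjoint_eq (I T : finType) (D : I -> {set T}) (A : {set T}) :
  (forall i j, i != j -> [disjoint D i & D j]) -> (forall i, D i \subset A) ->
  (\sum_i #|D i|)%N = #|A| -> \bigcup_i D i = A.
Proof.
move=> disjD subA cardA; apply/eqP; rewrite eqEcard card_bigcup_disjoint // cardA.
by rewrite leqnn andbT; apply/bigcupsP=> i _; apply: subA.
Qed.

Lemma dvdn_42_exp2_sub2 n : (n %% 6 = 1)%N -> (42 %| 2 ^ n - 2)%N.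
Proof.
move=> n_mod6; rewrite (divn_eq n 6) n_mod6 addn1 expnS [(_ * 6)%N]mulnC expnM.
rewrite -[(2 ^ 6)%N]/64%N -[X in (_ - X)%N]muln1 -mulnBr.
rewrite (@dvdn_trans (2 * 63)%N) // dvdn_pmul2l //.
by rewrite -eqn_mod_dvd ?expn_gt0 // -modnXm exp1n.
Qed.

Definition offdiag (T : finType) (A : {set T}) : {set T * T} :=
  [set p in setX A A | p.1 != p.2].

Lemma card_offdiag (T : finType) (A : {set T}) : #|offdiag A| = (#|A| * #|A|.-1)%N.
Proof.
have -> : offdiag A = setX A A :\: [set (a, a) | a in A].
  apply/setP=> -[a b]; rewrite !inE /=.
  have [<-|ab] := eqVneq a b; rewrite /=.
    by case: (boolP (a \in A)) => aA; rewrite ?andbF // imset_f.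
  case: imsetP => [[c _ [ac bc]]|_]; last by rewrite andbT.
  by rewrite ac bc eqxx in ab.
rewrite cardsD cardsX (setIidPr _); last first.
  by apply/subsetP=> _ /imsetP[a aA ->]; rewrite inE /= aA.
by rewrite card_imset => [|a b []//]; rewrite -subn1 mulnBr muln1.
Qed.

Lemma card_subspace2_nonzero (V : finZmodType) k (X : {set V}) :
  is_subspace2 k X -> #|X :\ 0| = (2 ^ k).-1.
Proof. by case/and3P=> X0 _ /eqP cardX; rewrite -cardX (cardsD1 0 X) X0. Qed.

Section PrimitiveElement.
Variables (F : finFieldType) (alpha : F).
Local Notation N := #|F|.-1.
Hypothesis alpha_prim : N.-primitive_root alpha.

Lemma expr_prim_neq0 i : alpha ^+ i != 0.
Proof.
by rewrite expf_neq0 // (prim_root_eq0 alpha_prim) -lt0n (prim_order_gt0 alpha_prim).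
Qed.

Lemma expr_ord_inj : injective (fun i : 'I_N => alpha ^+ i).
Proof.
move=> i j /eqP; rewrite (eq_prim_root_expr alpha_prim) !modn_small ?ltn_ord //.
by move/eqP/val_inj.
Qed.

Lemma expr_ordP x : x != 0 -> {i : 'I_N | x = alpha ^+ i}.
Proof.
move=> x0; apply: (@prim_rootP _ _ _ alpha_prim x); apply: (mulIf x0).
by rewrite mul1r -exprSr prednK ?expf_card // ltnW ?finNzRing_gt1.
Qed.

Lemma expr_sub_mod (i j : 'I_N) : alpha ^+ ((i + N - j) %% N) = alpha ^+ i / alpha ^+ j.
Proof.
rewrite (prim_expr_mod alpha_prim); apply: (mulIf (expr_prim_neq0 j)).
rewrite divfK ?expr_prim_neq0 // -exprD subnK; last exact/ltnW/ltn_addl.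
by rewrite exprD (prim_expr_order alpha_prim) mulr1.
Qed.

Definition ratio_set (X : {set F}) : {set F} := [set p.1 / p.2 | p in offdiag (X :\ 0)].

Lemma ratio_set_sub X : ratio_set X \subset [set~ 0] :\ 1.
Proof.
apply/subsetP=> _ /imsetP[[u v] + ->]; rewrite !inE /=.
move=> /andP[/andP[/andP[u0 _] /andP[v0 _]] uv].
rewrite mulf_neq0 ?invr_eq0 // andbT; apply: contra uv => /eqP uv1.
by rewrite -[u](divfK v0) uv1 mul1r.
Qed.

Lemma ratio_set_neq0 X r : r \in ratio_set X -> r != 0.
Proof. by move/(subsetP (ratio_set_sub X)); rewrite !inE => /andP[]. Qed.

Lemma mem_diffset X (d : 'I_N) : (d \in diffset alpha X) = (alpha ^+ d \in ratio_set X).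
Proof.
apply/idP/imsetP=> [|[[u v]]].
  rewrite inE => /existsP[i /existsP[j /and4P[ij iX jX /eqP->]]].
  exists (alpha ^+ i, alpha ^+ j); last exact: expr_sub_mod.
  by rewrite !inE /= !expr_prim_neq0 iX jX (inj_eq expr_ord_inj).
rewrite !inE /= => /andP[/andP[/andP[u0 uX] /andP[v0 vX]] uv].
have [i uE] := expr_ordP u0; have [j vE] := expr_ordP v0.
rewrite uE vE -expr_sub_mod => /eqP; rewrite (eq_prim_root_expr alpha_prim).
rewrite modn_mod modn_small // => /eqP dE.
apply/existsP; exists i; apply/existsP; exists j.
by rewrite -uE -vE uX vX dE eqxx !andbT; apply: contra uv => /eqP ij; rewrite uE vE ij.
Qed.

Lemma card_diffset X : #|diffset alpha X| = #|ratio_set X|.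
Proof.
rewrite -(card_imset (diffset alpha X) expr_ord_inj); apply: eq_card => r.
apply/imsetP/idP=> [[d]|rX]; first by rewrite mem_diffset => dX ->.
by have [d rE] := expr_ordP (ratio_set_neq0 rX); exists d; rewrite // mem_diffset -rE.
Qed.

Lemma disjoint_ratio_set X Y :
  [disjoint diffset alpha X & diffset alpha Y] -> [disjoint ratio_set X & ratio_set Y].
Proof.
move=> dXY; rewrite -setI_eq0; apply/eqP/setP=> r; rewrite !inE.
apply/negbTE/andP=> -[rX rY]; have [d rE] := expr_ordP (ratio_set_neq0 rX).
by rewrite rE -!mem_diffset in rX rY; rewrite (disjointFr dXY rX) in rY.
Qed.

Lemma complete_ratio_inj X : is_subspace2 3 X -> complete alpha X ->
  {in offdiag (X :\ 0) &, injective (fun p : F * F => p.1 / p.2)}.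
Proof.
move=> X3 /eqP cplX; apply/imset_injP.
by rewrite -/(ratio_set X) -card_diffset cplX card_offdiag (card_subspace2_nonzero X3).
Qed.

End PrimitiveElement.

Section Dilation.
Variable F : finFieldType.

Definition dilate (c : F) (X : {set F}) : {set F} := [set c * u | u in X].

Lemma mem_dilate c X x : c != 0 -> (x \in dilate c X) = (c^-1 * x \in X).
Proof.
move=> c0; apply/imsetP/idP=> [[u uX ->]|xX]; first by rewrite mulKf.
by exists (c^-1 * x); rewrite // mulVKf.
Qed.

Lemma subspace2_dilate k c X : c != 0 -> is_subspace2 k X -> is_subspace2 k (dilate c X).
Proof. by move=> c0; apply: subspace2_image (mulrDr c) (mulfI c0). Qed.

Lemma dilate_offdiag c X x y : c != 0 -> x != 0 -> y != 0 -> x != y ->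
  x \in dilate c X -> y \in dilate c X -> (c^-1 * y, c^-1 * x) \in offdiag (X :\ 0).
Proof.
move=> c0 x0 y0 xy; rewrite !mem_dilate // !inE /= => xX yX.
have ci0 : c^-1 != 0 by rewrite invr_eq0.
by rewrite xX yX !mulf_neq0 // (inj_eq (mulfI ci0)) eq_sym.
Qed.

End Dilation.

Section OrbitBlocks.
Variables (F : finFieldType) (alpha : F).
Hypothesis alpha_prim : #|F|.-1.-primitive_root alpha.
Hypothesis F_char2 : 2%N \in [pchar F].
Variables (M : nat) (f : 'I_M -> {set F}).
Hypothesis f_subspace : forall i, is_subspace2 3 (f i).
Hypothesis f_complete : forall i, complete alpha (f i).
Hypothesis f_disjoint :
  forall i j, i != j -> [disjoint diffset alpha (f i) & diffset alpha (f j)].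
Hypothesis card_family : (42 * M = #|F| - 2)%N.

Definition orbit_blocks : {set {set F}} :=
  [set dilate c (f i) | c in [set~ 0], i in [set: 'I_M]].

Lemma orbit_blocks_subspace B : B \in orbit_blocks -> is_subspace2 3 B.
Proof. by case/imset2P=> c i; rewrite !inE => c0 _ ->; apply: subspace2_dilate. Qed.

Lemma ratio_set_cover r : r != 0 -> r != 1 -> exists i, r \in ratio_set (f i).
Proof.
have cover : \bigcup_i ratio_set (f i) = [set~ 0] :\ 1.
  apply: bigcup_disjoint_eq => [i j /f_disjoint/(disjoint_ratio_set alpha_prim)//|i|].
    exact: ratio_set_sub.
  rewrite (eq_bigr (fun=> 42%N)) => [|i _]; last first.
    by rewrite -(card_diffset alpha_prim) (eqP (f_complete i)).
  rewrite sum_nat_const card_ord mulnC card_family.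
  move: (cardsD1 1 [set~ (0 : F)]); rewrite cardsC1 !inE oner_neq0 /=.
  by rewrite subn2 => ->.
move=> r0 r1; have : r \in \bigcup_i ratio_set (f i) by rewrite cover !inE r0 r1.
by case/bigcupP=> i _; exists i.
Qed.

Lemma orbit_block_through x y : x != 0 -> y != 0 -> x != y ->
  exists2 B, B \in orbit_blocks & (x \in B) && (y \in B).
Proof.
move=> x0 y0 xy.
have [i /imsetP[[u v] + yxE]] : exists i, y / x \in ratio_set (f i).
  apply: ratio_set_cover; first by rewrite mulf_neq0 ?invr_eq0.
  by apply: contra xy => /eqP yx1; rewrite -[y](divfK x0) yx1 mul1r.
rewrite !inE /= => /andP[/andP[/andP[u0 uX] /andP[v0 vX]] _].
(* Dilating by x / v sends v to x and, since u / v = y / x, u to y. *)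
have c0 : x / v != 0 by rewrite mulf_neq0 ?invr_eq0.
exists (dilate (x / v) (f i)); first by apply/imset2P; exists (x / v) i; rewrite ?inE.
rewrite !mem_dilate // invf_div divfK // vX /=.
by rewrite mulrAC -mulrA yxE mulrC divfK.
Qed.

Lemma orbit_block_unique x y B1 B2 : x != 0 -> y != 0 -> x != y ->
  B1 \in orbit_blocks -> B2 \in orbit_blocks ->
  (x \in B1) && (y \in B1) -> (x \in B2) && (y \in B2) -> B1 = B2.
Proof.
move=> x0 y0 xy /imset2P[c1 i1 + _ ->] /imset2P[c2 i2 + _ ->].
rewrite !inE => c1_0 c2_0 /andP[xB1 yB1] /andP[xB2 yB2].
have p1 := dilate_offdiag c1_0 x0 y0 xy xB1 yB1.
have p2 := dilate_offdiag c2_0 x0 y0 xy xB2 yB2.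
have ratioE c : c != 0 -> (c^-1 * y) / (c^-1 * x) = y / x.
  by move=> c0; rewrite invfM invrK mulrACA mulVf // mul1r.
have r1 : y / x \in ratio_set (f i1).
  by apply/imsetP; exists (c1^-1 * y, c1^-1 * x); rewrite //= ratioE.
have r2 : y / x \in ratio_set (f i2).
  by apply/imsetP; exists (c2^-1 * y, c2^-1 * x); rewrite //= ratioE.
have i12 : i1 = i2.
  apply: contraTeq r2 => /f_disjoint/(disjoint_ratio_set alpha_prim).
  by move/disjointFr/(_ r1)->.
subst i2; have := complete_ratio_inj alpha_prim (f_subspace i1) (f_complete i1) p1 p2.
by rewrite /= !ratioE // => /(_ erefl) [_ /(mulIf x0)/invr_inj->].
Qed.

Lemma orbit_blocks_steiner : steiner_system 2 3 orbit_blocks.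
Proof.
split=> [|_ /(subspace2_plane (addrr_pchar2 F_char2))[x [y [x0 y0 xy ->]]]].
  exact: orbit_blocks_subspace.
have [B0 B0_orbit xyB0] := orbit_block_through x0 y0 xy.
apply/eqP/cards1P; exists B0; apply/setP=> B; rewrite !inE.
apply/andP/eqP=> [[B_orbit]|->]; last first.
  by case/and3P: (orbit_blocks_subspace B0_orbit) => B0_zero B0_add _; rewrite plane_subset.
case/and3P: (orbit_blocks_subspace B_orbit) => B_zero B_add _; rewrite plane_subset //.
by move=> xyB; apply: orbit_block_unique x0 y0 xy B_orbit B0_orbit xyB xyB0.
Qed.

End OrbitBlocks.

Lemma finField_additive_iso (F : finFieldType) p n : prime p -> #|F| = (p ^ n)%N ->
  exists2 g : F -> 'rV['F_p]_n, {morph g : x y / x + y} & bijective g.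
Proof.
move=> p_prime cardF; have F_char := card_finPcharP cardF p_prime.
have := pprimeChar_vectAxiom F_char.
rewrite [logn p _]/= [X in logn p X]cardF pfactorK // => -[g g_lin g_bij].
by exists g => // x y; have := g_lin 1 x y; rewrite !scale1r.
Qed.

Theorem theorem1 (n : nat) (F : finFieldType) (alpha : F)
  (hn : (0 < n)%N) (hmod : (n %% 6 = 1)%N)
  (hF : #|F| = (2 ^ n)%N)
  (halpha : (#|F|.-1).-primitive_root alpha)
  (hfam : exists f : 'I_(((2 ^ n) - 2) %/ 42) -> {set F},
     (forall i, is_subspace2 3 (f i) /\ complete alpha (f i)) /\
     (forall i j, i != j -> [disjoint diffset alpha (f i) & diffset alpha (f j)])) :
  exists S : {set {set 'rV['F_2]_n}}, steiner_structure2 2 3 S.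
Proof.
have [f [f_blocks f_disjoint]] := hfam.
have f_subspace i := (f_blocks i).1; have f_complete i := (f_blocks i).2.
have F_char2 : (2 \in [pchar F])%N by apply: card_finPcharP hF _.
have card_family : (42 * ((2 ^ n - 2) %/ 42) = #|F| - 2)%N.
  by rewrite mulnC divnK ?hF // dvdn_42_exp2_sub2.
have [g g_add g_bij] := finField_additive_iso (isT : prime 2) hF.
have blocks :=
  orbit_blocks_steiner halpha F_char2 f_subspace f_complete f_disjoint card_family.
by eexists; apply: steiner_system_image g_add g_bij blocks.
Qed.
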